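(* Let $\Lambda=(\lambda_i)_{i=0}^\infty$ be a strictly increasing sequence of non-negative reals with $\lambda_0=0$, $\lambda_1\geq 1$ and $\sum_{i=1}^\infty 1/\lambda_i<\infty$, and let $M(\Lambda)=\overline{\operatorname{span}}\{t^{\lambda_i}: i\geq 0\}\subseteq C[0,1]$ with the sup-norm. Then $M(\Lambda)$ is not locally almost square.
   Context: $C[0,1]$ is the space of real-valued continuous functions on $[0,1]$ with the sup-norm. A Banach space $X$ with closed unit ball $B_X$ and unit sphere $S_X$ is locally almost square if for every $x\in S_X$ there exists a sequence $(y_n)$ in $B_X$ such that $\|y_n\|\to 1$ and $\|x\pm y_n\|\to 1$. *)

From HB Require Import structures.
From mathcomp Require Import all_boot all_order all_algebra.
From mathcomp Require Import all_classical all_reals all_analysis.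
Set Implicit Arguments. Unset Strict Implicit. Unset Printing Implicit Defensive.
Import Order.TTheory GRing.Theory Num.Theory.
Import numFieldNormedType.Exports.
Local Open Scope classical_set_scope.
Local Open Scope ring_scope.

(* An element of C[0,1] is represented by a function R -> R that is
   continuous on [0,1]; only its values on [0,1] matter. *)
Definition C01 {R : realType} (f : R -> R) : Prop :=
  {within `[0, 1]%classic, continuous f}.

Definition supnorm {R : realType} (f : R -> R) : R :=
  sup [set `|f t| | t in `[(0:R), 1]%classic].

Definition muntz_span {R : realType} (lam : nat -> R) : set (R -> R) :=
  [set g | exists (n : nat) (c : nat -> R),
      g = (fun t => \sum_(i < n) c i * powR t (lam i))].

Definition M_Lambda {R : realType} (lam : nat -> R) : set (R -> R) :=
  [set f | C01 f /\
     forall e : R, 0 < e -> exists2 g, muntz_span lam g & supnorm (f \- g) < e].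

Definition locally_almost_square {R : realType} (X : set (R -> R)) : Prop :=
  forall x, X x -> supnorm x = 1 ->
    exists y : nat -> (R -> R),
      (forall n, X (y n)) /\ (forall n, supnorm (y n) <= 1) /\
      (supnorm (y n) @[n --> \oo] --> (1:R)) /\
      (supnorm (x \+ y n) @[n --> \oo] --> (1:R)) /\
      (supnorm (x \- y n) @[n --> \oo] --> (1:R)).

(* Only [lam 0 = 0] matters: it puts the constant function 1 into M(Lambda),
   and 1 is a point where no subspace of C[0,1] can be locally almost square.
   Indeed, for every y and t, [max(|1 + y t|, |1 - y t|) = 1 + |y t|], hence
   [max(||1 + y||, ||1 - y||) = 1 + ||y||], which cannot tend to 1 while
   [||y||] tends to 1. *)
From HB Require Import structures.
From mathcomp Require Import all_boot all_order all_algebra.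
From mathcomp Require Import all_classical all_reals all_analysis.
From mathcomp Require Import lra.
Import Order.TTheory GRing.Theory Num.Theory.
Import numFieldNormedType.Exports.
Local Open Scope classical_set_scope.
Local Open Scope ring_scope.

Section SupNorm.
Variable R : realType.
Implicit Types (f y : R -> R) (a B : R).

Let in01_0 : (0:R) \in `[(0:R), 1]%R.
Proof. by rewrite in_itv /= lexx ler01. Qed.

Lemma supnorm_le f a :
  (forall s, s \in `[(0:R), 1]%R -> `|f s| <= a) -> supnorm f <= a.
Proof.
move=> fa; rewrite leNgt; apply/negP => /sup_gt [].
  by exists `|f 0|, 0.
by move=> _ [s s01 <-]; rewrite ltNge fa.
Qed.

Lemma bounded_norm_le_supnorm f B t :
  (forall s, s \in `[(0:R), 1]%R -> `|f s| <= B) ->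
  t \in `[(0:R), 1]%R -> `|f t| <= supnorm f.
Proof.
move=> fB t01; apply: sup_upper_bound; last by exists t.
split; first by exists `|f t|, t.
by exists B => _ [s s01 <-]; apply: fB.
Qed.

Lemma C01_bounded f : C01 f ->
  exists B, forall s, s \in `[(0:R), 1]%R -> `|f s| <= B.
Proof.
move=> fC; have [c1 _ fmin] := EVT_min ler01 fC.
have [c2 _ fmax] := EVT_max ler01 fC.
exists (`|f c1| + `|f c2|) => s s01; rewrite ler_norml.
have := fmin s s01; have := fmax s s01.
have := ler_norm (f c2); have := ler_norm (- f c1); rewrite normrN.
have := normr_ge0 (f c1); have := normr_ge0 (f c2).
by move=> *; apply/andP; split; lra.
Qed.

Lemma supnorm_cst a : supnorm (cst a) = `|a|.
Proof.
apply/le_anti/andP; split; first exact: supnorm_le.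
exact: (@bounded_norm_le_supnorm (cst a) `|a| 0).
Qed.

Lemma one_add_norm_le_max a : 1 + `|a| <= Num.max `|1 + a| `|1 - a|.
Proof.
rewrite le_max; apply/orP; case: (lerP 0 a) => a0; [left | right].
  by rewrite !ger0_norm //; lra.
by rewrite ltr0_norm // [`|1 - a|]ger0_norm //; lra.
Qed.

Lemma one_add_supnorm_le_max y : C01 y ->
  1 + supnorm y <= Num.max (supnorm (cst 1 \+ y)) (supnorm (cst 1 \- y)).
Proof.
move=> /C01_bounded[B yB]; rewrite addrC -lerBrDr; apply: supnorm_le => s s01.
have yDs : `|1 + y s| <= supnorm (cst 1 \+ y).
  apply: (@bounded_norm_le_supnorm (cst 1 \+ y) (1 + B)) => // u u01 /=.
  by rewrite (le_trans (ler_normD _ _)) // normr1 lerD2l yB.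
have yBs : `|1 - y s| <= supnorm (cst 1 \- y).
  apply: (@bounded_norm_le_supnorm (cst 1 \- y) (1 + B)) => // u u01 /=.
  by rewrite (le_trans (ler_normB _ _)) // normr1 lerD2l yB.
rewrite lerBrDr addrC (le_trans (one_add_norm_le_max _)) //.
by rewrite ge_max !le_max yDs yBs orbT.
Qed.

Lemma not_locally_almost_square_cst1 (X : set (R -> R)) :
  X (cst 1) -> X `<=` C01 -> ~ locally_almost_square X.
Proof.
move=> X1 XC /(_ _ X1); rewrite supnorm_cst normr1 => /(_ erefl).
move=> [y [Xy [_ [y1 [yD yB]]]]].
have half_lt1 : 1/2 < 1 :> R by lra.
have lt_5_4 : 1 < 5/4 :> R by lra.
have [n [[yn_gt yDn_lt] yBn_lt]] := filter_ex (filterI (filterI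
  (cvgr_gt 1 y1 _ half_lt1) (cvgr_lt 1 yD _ lt_5_4)) (cvgr_lt 1 yB _ lt_5_4)).
suff : 1 + supnorm (y n) < 5/4 by lra.
apply: le_lt_trans (@one_add_supnorm_le_max (y n) (XC _ (Xy n))) _.
by rewrite gt_max yDn_lt yBn_lt.
Qed.

End SupNorm.

Lemma M_Lambda_cst (R : realType) (lam : nat -> R) (a : R) :
  lam 0%N = 0 -> M_Lambda lam (cst a).
Proof.
move=> lam0; split; first by move=> t; exact: cvg_cst.
move=> e e0; exists (cst a).
  exists 1%N, (fun _ => a); apply: funext => t.
  by rewrite big_ord1 lam0 powRr0 mulr1.
by apply: (le_lt_trans _ e0); apply: supnorm_le => s _ /=; rewrite subrr normr0.
Qed.

Theorem mainTheorem4 (R : realType) (lam : nat -> R) :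
  (forall i j : nat, (i < j)%N -> lam i < lam j) ->
  (forall i : nat, 0 <= lam i) ->
  lam 0%N = 0 ->
  1 <= lam 1%N ->
  cvg (series (fun i : nat => (lam i.+1)^-1) @ \oo) ->
  ~ locally_almost_square (M_Lambda lam).
Proof.
move=> _ _ lam0 _ _; apply: not_locally_almost_square_cst1.
- exact: M_Lambda_cst.
- by move=> f [].
Qed.
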